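(* For every prime power $q$ and all $k,r,\ell,m\in\mathbb{N}$ such that $k\leq r\leq\ell\leq q/2$, $m(k-1)<r$, and $m(\ell-1)<n:=q-r$, there exists an $[[n,\,k,\,\geq\ell+1-r]]_q$ quantum CSS code $Q$ (with a $Z$ encoding function on $\mathbb{F}_{q^k}$) that is $m$-multiplication-friendly.
   Context: $x*y$ is the componentwise product, $x\cdot y=\sum_ix_iy_i$, $V^\perp$ the dual. A quantum CSS code $\mathrm{CSS}(Q_X,Q_Z)$ of length $n$ over $\mathbb{F}_q$ is a pair of subspaces $Q_X,Q_Z\subseteq\mathbb{F}_q^n$ with $Q_X^\perp\subseteq Q_Z$, of dimension $k=\dim Q_Z-\dim Q_X^\perp$ and distance $\min\{|y|:y\in(Q_X\setminus Q_Z^\perp)\cup(Q_Z\setminus Q_X^\perp)\}$. A $Z$ encoding function is an $\mathbb{F}_q$-linear isomorphism $\mathrm{Enc}_Z:\mathbb{F}_{q^k}\to Q_Z/Q_X^\perp$ (viewing $\mathbb{F}_{q^k}$ as a $k$-dimensional $\mathbb{F}_q$-space). A code $Q=\mathrm{CSS}(Q_X,Q_Z;\mathrm{Enc}_Z)$ is $m$-multiplication-friendly if there is an $\mathbb{F}_q$-linear $\mathrm{Dec}_Z:\mathbb{F}_q^n\to\mathbb{F}_{q^k}$ such that for all $z_1,\dots,z_m\in\mathbb{F}_{q^k}$ and all $z_h'\in\mathrm{Enc}_Z(z_h)$, $z_1z_2\cdots z_m=\mathrm{Dec}_Z(z_1'*\cdots*z_m')$. *)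

From HB Require Import structures.
From mathcomp Require Import all_boot all_order all_algebra all_field.
Set Implicit Arguments. Unset Strict Implicit. Unset Printing Implicit Defensive.
Import GRing.Theory.
Local Open Scope ring_scope.

(* Vectors of F^n are row vectors 'rV[F]_n; subspaces of F^n are represented
   (mxalgebra style) by square matrices 'M[F]_n through their row space.    *)

Definition dotv (F : fieldType) n (x y : 'rV[F]_n) : F := \sum_(i < n) x 0 i * y 0 i.

Definition wt (F : fieldType) n (x : 'rV[F]_n) : nat := #|[set i | x 0 i != 0]|.

Definition hprod (F : fieldType) n m (z : 'I_m -> 'rV[F]_n) : 'rV[F]_n :=
  \row_(i < n) \prod_(h < m) z h 0 i.

Definition dualmx (F : fieldType) n (V : 'M[F]_n) : 'M[F]_n := kermx V^T.

Definition is_CSS (F : fieldType) n (QX QZ : 'M[F]_n) : Prop :=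
  (dualmx QX <= QZ)%MS.

Definition css_dim (F : fieldType) n (QX QZ : 'M[F]_n) : nat :=
  (\rank QZ - \rank (dualmx QX))%N.

Definition css_dist_ge (F : fieldType) n (QX QZ : 'M[F]_n) (d : nat) : Prop :=
  forall y : 'rV[F]_n,
    ((y <= QX)%MS && ~~ (y <= dualmx QZ)%MS) || ((y <= QZ)%MS && ~~ (y <= dualmx QX)%MS) ->
    (d <= wt y)%N.

(* A Z encoding function Enc_Z : L -> Q_Z / Q_X^perp (F-linear isomorphism),
   given through an F-linear lift E : L -> F^n : Enc_Z(z) is the coset
   E z + Q_X^perp. *)
Definition Z_encoding (F : fieldType) (L : fieldExtType F) n (QX QZ : 'M[F]_n)
    (E : L -> 'rV[F]_n) : Prop :=
  [/\ forall (a : F) (u v : L), E (a *: u + v) = a *: E u + E v,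
      forall z : L, (E z <= QZ)%MS,
      forall z : L, (E z <= dualmx QX)%MS -> z = 0 &
      forall y : 'rV[F]_n, (y <= QZ)%MS -> exists z : L, (y - E z <= dualmx QX)%MS].

Definition in_Enc (F : fieldType) (L : fieldExtType F) n (QX : 'M[F]_n)
    (E : L -> 'rV[F]_n) (z : L) (z' : 'rV[F]_n) : Prop :=
  (z' - E z <= dualmx QX)%MS.

Definition mult_friendly (F : fieldType) (L : fieldExtType F) n (QX : 'M[F]_n)
    (E : L -> 'rV[F]_n) (m : nat) : Prop :=
  exists Dec : 'rV[F]_n -> L,
    (forall (a : F) (u v : 'rV[F]_n), Dec (a *: u + v) = a *: Dec u + Dec v) /\
    forall (z : 'I_m -> L) (z' : 'I_m -> 'rV[F]_n),
      (forall h, in_Enc QX E (z h) (z' h)) ->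
      \prod_(h < m) z h = Dec (hprod z').

From HB Require Import structures.
From mathcomp Require Import all_boot all_order all_algebra all_field.
From mathcomp Require Import zify.

(* Let θ generate F_{q^k} over F_q, with minimal polynomial p of degree k, and evaluate
   at n = q - r points of F_q that are not roots of p (p has at most k <= r roots).
   Take for Q_Z the Reed-Solomon code of polynomials of degree < ℓ and for Q_X^⊥ the
   evaluations of the multiples p h with deg h < ℓ - k.  Then Q_Z / Q_X^⊥ is F_q[X]/(p),
   i.e. F_{q^k}, and z is encoded by the evaluations of its representative of degree < k.
   A componentwise product of m codewords of Q_Z is the evaluation of a polynomial of
   degree <= m (ℓ - 1) < n, which interpolation recovers exactly; evaluating it at θ gives
   the product in F_{q^k}, because multiples of p vanish at θ.  Both distance bounds are
   root counting: a nonzero word of Q_Z has weight >= n - ℓ + 1, and a nonzero word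
   orthogonal to Q_X^⊥ has weight > ℓ - k. *)

Set Implicit Arguments. Unset Strict Implicit. Unset Printing Implicit Defensive.
Import GRing.Theory.
Local Open Scope ring_scope.

Lemma size_prod_leq_const (R : nzSemiRingType) m d (f : 'I_m -> {poly R}) :
  (forall h, (size (f h) <= d)%N) -> (size (\prod_(h < m) f h)%R <= (m * d.-1).+1)%N.
Proof.
move=> le_f_d; apply: leq_trans (size_poly_prod_leq _ _) _.
have := @leq_sum _ (index_enum _) xpredT _ _ (fun h _ => le_f_d h).
rewrite sum_nat_const cardT size_enum_ord; case: d {le_f_d} => [|d]; lia.
Qed.

Section Evaluation.
Variables (F : fieldType) (n : nat) (a : 'I_n -> F).

Definition ev (f : {poly F}) : 'rV[F]_n := \row_i f.[a i].

Fact ev_is_semilinear : semilinear ev.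
Proof. by split=> [c f|f g]; apply/rowP => i; rewrite !mxE (hornerZ, hornerD). Qed.
HB.instance Definition _ :=
  GRing.isSemilinear.Build F {poly F} 'rV[F]_n _ ev ev_is_semilinear.

Definition evmx (g : {poly F}) d : 'M[F]_(d, n) :=
  \matrix_(j < d, i < n) (g * 'X^j).[a i].

Lemma mul_evmx g d (v : 'rV_d) : v *m evmx g d = ev (g * rVpoly v).
Proof.
apply/rowP => i; rewrite !mxE hornerM horner_poly mulr_sumr.
by apply: eq_bigr => j _; rewrite !mxE hornerM hornerXn valK mulrCA.
Qed.

Lemma sub_evmxP g d (y : 'rV_n) :
  (y <= evmx g d)%MS <-> exists2 h : {poly F}, (size h <= d)%N & y = ev (g * h).
Proof.
split=> [/submxP[v ->] | [h le_h_d ->]].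
  by exists (rVpoly v); rewrite ?size_poly ?mul_evmx.
by apply/submxP; exists (poly_rV h); rewrite mul_evmx poly_rV_K.
Qed.

Lemma row_evmx g d j : row j (evmx g d) = ev (g * 'X^j).
Proof. by apply/rowP => i; rewrite !mxE. Qed.

Lemma hprod_ev m (f : 'I_m -> {poly F}) :
  hprod (fun h => ev (f h)) = ev (\prod_(h < m) f h).
Proof.
by apply/rowP => i; rewrite !mxE horner_prod; apply: eq_bigr => h _; rewrite mxE.
Qed.

Hypothesis a_inj : injective a.

Lemma wt_ev (f : {poly F}) : f != 0 -> (n - (size f).-1 <= wt (ev f))%N.
Proof.
move=> f_neq0; pose Z := [set i | f.[a i] == 0].
have -> : wt (ev f) = #|~: Z| by apply: eq_card => i; rewrite !inE mxE.
have card_Z : (#|Z| < size f)%N.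
  rewrite cardE -(size_map a); apply: max_poly_roots f_neq0 _ _.
    by apply/allP => x /mapP[i]; rewrite mem_enum inE => /eqP/rootP ? ->.
  by rewrite map_inj_uniq ?enum_uniq.
have := cardsC Z; rewrite card_ord; lia.
Qed.

Lemma ev_eq0 (f : {poly F}) : (size f <= n)%N -> ev f = 0 -> f = 0.
Proof.
move=> le_f_n ev_f0; apply/eqP; apply: contraT => f_neq0.
have := wt_ev f_neq0; rewrite ev_f0 /wt.
under eq_finset => i do rewrite mxE eqxx.
rewrite cards0; have := size_poly_gt0 f; rewrite f_neq0; lia.
Qed.

Lemma row_free_evmx (g : {poly F}) d :
  g != 0 -> ((size g).-1 + d <= n)%N -> row_free (evmx g d).
Proof.
move=> g_neq0 le_gd_n; apply: inj_row_free => v; rewrite mul_evmx => /ev_eq0.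
have le_gv : (size (g * rVpoly v)%R <= n)%N.
  apply: leq_trans (size_polyMleq _ _) _.
  have : (size (rVpoly v) <= d)%N := size_poly _ _.
  have := size_poly_gt0 g; rewrite g_neq0; lia.
move=> /(_ le_gv)/eqP; rewrite mulf_eq0 (negPf g_neq0) /= => /eqP v0.
by rewrite -[v]rVpolyK v0 linear0.
Qed.

(* If wt y <= d, a polynomial t of size wt y vanishing on the support of y except at one
   point i0 kills every term of the inner product of y with ev (p * t) but the i0-th. *)
Lemma wt_orthogonal_evmx (p : {poly F}) d (y : 'rV_n) :
  (forall i, p.[a i] != 0) -> y *m (evmx p d)^T = 0 -> y != 0 -> (d < wt y)%N.
Proof.
move=> p_a_neq0 y_orth y_neq0; rewrite ltnNge; apply/negP => le_wt_d.
pose S := [set i | y 0 i != 0].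
have /set0Pn[i0 S_i0] : S != set0.
  apply: contra_neq y_neq0 => S0; apply/rowP => i; rewrite mxE.
  by apply/eqP; apply: contraFT (in_set0 i); rewrite -S0 inE.
pose t := \prod_(x <- [seq a i | i <- enum (S :\ i0)]) ('X - x%:P).
have root_t i : root t (a i) = (i \in S :\ i0).
  by rewrite root_prod_XsubC (mem_map a_inj) mem_enum.
have le_t_d : (size t <= d)%N.
  by rewrite size_prod_XsubC size_map -cardE; rewrite /wt -/S (cardsD1 i0 S) S_i0 in le_wt_d.
have : y *m (ev (p * t))^T = 0.
  by rewrite -(poly_rV_K le_t_d) -mul_evmx trmx_mul mulmxA y_orth mul0mx.
move/(congr1 (fun M : 'M_1 => M 0 0)); rewrite !mxE (bigD1 i0) //= big1 => [|i ne_i_i0].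
  rewrite !mxE addr0 hornerM => /eqP; rewrite !mulf_eq0 (negPf (p_a_neq0 _)) /=.
  by rewrite -[t.[_] == 0]/(root t _) root_t !inE eqxx; move: S_i0; rewrite inE => /negPf->.
rewrite !mxE hornerM; have [-> | y_i_neq0] := eqVneq (y 0 i) 0; first by rewrite mul0r.
by move: (root_t i); rewrite !inE ne_i_i0 y_i_neq0 => /rootP->; rewrite !mulr0.
Qed.

Definition interp (y : 'rV_n) : {poly F} := rVpoly (y *m invmx (evmx 1 n)).

Fact interp_is_semilinear : semilinear interp.
Proof.
by split=> [c u|u v]; rewrite /interp; [rewrite -scalemxAl linearZ | rewrite mulmxDl linearD].
Qed.
HB.instance Definition _ :=
  GRing.isSemilinear.Build F 'rV[F]_n {poly F} _ interp interp_is_semilinear.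

Lemma ev_interp (f : {poly F}) : (size f <= n)%N -> interp (ev f) = f.
Proof.
move=> le_f_n; have evmx1_unit : evmx 1 n \in unitmx.
  by rewrite -row_free_unit row_free_evmx ?oner_neq0 ?size_poly1.
have -> : ev f = poly_rV f *m evmx 1 n by rewrite mul_evmx mul1r poly_rV_K.
by rewrite /interp mulmxK ?poly_rV_K.
Qed.

End Evaluation.

Lemma dualmx_genmx_orth (F : fieldType) m n d (A : 'M[F]_(d, n)) (y : 'M_(m, n)) :
  (y <= dualmx <<A>>)%MS -> y *m A^T = 0.
Proof.
move/sub_kermxP => y_orth; have /submxP[D ->] : (A <= <<A>>)%MS by rewrite genmxE.
by rewrite trmx_mul mulmxA y_orth mul0mx.
Qed.

Lemma dualmx_genmxK (F : fieldType) n d (A : 'M[F]_(d, n)) :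
  (dualmx (dualmx <<A>>) :=: A)%MS.
Proof.
have sub_A : (A <= dualmx (dualmx <<A>>))%MS.
  by apply/sub_kermxP; rewrite -[A *m _]trmxK trmx_mul trmxK dualmx_genmx_orth ?trmx0.
apply/eqmx_sym/eqmxP; rewrite -(geq_leqif (mxrank_leqif_eq sub_A)).
by rewrite /dualmx !mxrank_ker !mxrank_tr mxrank_ker mxrank_tr genmxE subKn ?rank_leq_col.
Qed.

Section Encoding.
Variables (F : fieldType) (L : fieldExtType F) (th : L) (p : {poly F}) (k : nat).
Hypotheses (horner_th_onto : forall v : L, exists g, v = horner_alg th g)
  (horner_th_eq0 : forall f, (horner_alg th f == 0) = (p %| f))
  (size_p : size p = k.+1).

Definition enc (v : L) : {poly F} :=
  rVpoly (\row_(j < k) coord [tuple th ^+ j | j < k] j v).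

Fact enc_is_semilinear : semilinear enc.
Proof.
split=> [c u|u v]; rewrite /enc; [rewrite -linearZ | rewrite -linearD];
  by congr rVpoly; apply/rowP => j; rewrite !mxE (linearZ, linearD).
Qed.
HB.instance Definition _ := GRing.isSemilinear.Build F L {poly F} _ enc enc_is_semilinear.

Lemma size_enc v : (size (enc v) <= k)%N.
Proof. exact: size_poly. Qed.

Lemma horner_rVpoly d (w : 'rV_d) : horner_alg th (rVpoly w) = \sum_(j < d) w 0 j *: th ^+ j.
Proof.
rewrite /rVpoly poly_def rmorph_sum; apply: eq_bigr => j _.
by rewrite valK -mul_polyC rmorphM rmorphXn /= horner_algC horner_algX mulr_algl.
Qed.

Lemma horner_modp f : horner_alg th (f %% p) = horner_alg th f.
Proof.
have horner_p : horner_alg th p = 0 by apply/eqP; rewrite horner_th_eq0 dvdpp.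
by rewrite {2}(divp_eq f p) rmorphD rmorphM /= horner_p mulr0 add0r.
Qed.

Lemma encK : cancel enc (horner_alg th).
Proof.
pose B := [tuple th ^+ j | j < k].
have span_B v : v \in <<B>>%VS.
  have [g ->] := horner_th_onto v; rewrite -horner_modp.
  have le_g_k : (size (g %% p)%R <= k)%N.
    by rewrite -ltnS -size_p ltn_modp -size_poly_gt0 size_p.
  rewrite -(poly_rV_K le_g_k) horner_rVpoly; apply: rpred_sum => j _.
  by apply/rpredZ/memv_span; rewrite -[th ^+ j](tnth_mktuple (fun j => th ^+ j)) mem_tnth.
move=> v; rewrite horner_rVpoly {2}(coord_span (span_B v)); apply: eq_bigr => j _.
by rewrite mxE -(tnth_nth 0) tnth_mktuple.
Qed.

Lemma dvdp_sub_enc f : p %| f - enc (horner_alg th f).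
Proof. by rewrite -horner_th_eq0 rmorphB /= encK subrr. Qed.

End Encoding.

Section ReedSolomonCSS.
Variables (F : fieldType) (L : fieldExtType F) (n k l : nat) (a : 'I_n -> F).
Variables (th : L) (p : {poly F}).
Hypotheses (a_inj : injective a) (p_a_neq0 : forall i, p.[a i] != 0).
Hypotheses (horner_th_onto : forall v : L, exists g, v = horner_alg th g)
  (horner_th_eq0 : forall f, (horner_alg th f == 0) = (p %| f))
  (size_p : size p = k.+1).
Hypotheses (le_k_l : (k <= l)%N) (le_l_n : (l <= n)%N).

Let p_neq0 : p != 0.
Proof. by rewrite -size_poly_eq0 size_p. Qed.

Definition RS_code : 'M[F]_n := <<evmx a 1 l>>%MS.
Definition QX_code : 'M[F]_n := dualmx <<evmx a p (l - k)>>%MS.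
Definition enc_code (z : L) : 'rV[F]_n := ev a (enc th k z).

Lemma size_p_mul (h : {poly F}) : (size h <= l - k)%N -> (size (p * h)%R <= l)%N.
Proof. by move=> le_h; apply: leq_trans (size_polyMleq _ _) _; rewrite size_p; lia. Qed.

Lemma dualmx_QX_code : (dualmx QX_code :=: evmx a p (l - k))%MS.
Proof. exact: dualmx_genmxK. Qed.

Lemma sub_RS_codeP y :
  (y <= RS_code)%MS <-> exists2 f : {poly F}, (size f <= l)%N & y = ev a f.
Proof.
rewrite /RS_code genmxE sub_evmxP.
by split=> [] [f le_f ->]; exists f; rewrite ?mul1r.
Qed.

Lemma is_CSS_code : is_CSS QX_code RS_code.
Proof.
rewrite /is_CSS dualmx_QX_code; apply/row_subP => j; rewrite row_evmx.
by apply/sub_RS_codeP; exists (p * 'X^j); rewrite ?size_p_mul ?size_polyXn.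
Qed.

Lemma css_dim_code : css_dim QX_code RS_code = k.
Proof.
have rank_RS : \rank (evmx a 1 l) = l.
  by apply/eqP/row_free_evmx; rewrite ?oner_neq0 ?size_poly1.
have rank_QXperp : \rank (evmx a p (l - k)) = (l - k)%N.
  by apply/eqP/row_free_evmx; rewrite ?p_neq0 // size_p; lia.
by rewrite /css_dim dualmx_QX_code /RS_code genmxE rank_RS rank_QXperp subKn.
Qed.

Lemma css_dist_ge_code d :
  (d <= (l - k).+1)%N -> (d <= n - l.-1)%N -> css_dist_ge QX_code RS_code d.
Proof.
move=> le_d_X le_d_Z y /orP[/andP[y_X y_nZ] | /andP[y_Z y_nX]].
  have y_neq0 : y != 0 by apply: contraNneq y_nZ => ->; apply: sub0mx.
  apply: leq_trans le_d_X _.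
  exact: wt_orthogonal_evmx (dualmx_genmx_orth y_X) y_neq0.
have y_neq0 : y != 0 by apply: contraNneq y_nX => ->; apply: sub0mx.
have [f le_f_l y_f] := (sub_RS_codeP _).1 y_Z.
have f_neq0 : f != 0 by apply: contra_neq y_neq0 => f0; rewrite y_f f0 linear0.
rewrite y_f; apply: leq_trans le_d_Z (leq_trans _ (wt_ev a_inj f_neq0)).
by apply: leq_sub2l; rewrite -!subn1 leq_sub2r.
Qed.

Lemma horner_p_mul (t : {poly F}) : horner_alg th (p * t) = 0.
Proof. by apply/eqP; rewrite horner_th_eq0 dvdp_mulr. Qed.

Lemma Z_encoding_code : Z_encoding QX_code RS_code enc_code.
Proof.
have encK := encK horner_th_onto horner_th_eq0 size_p.
split=> [c u v | z | z | y].
- by rewrite /enc_code !linearP.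
- by apply/sub_RS_codeP; exists (enc th k z); rewrite ?(leq_trans (size_enc _ _ _)).
- rewrite dualmx_QX_code => /sub_evmxP[h le_h E_z].
  suff enc_z : enc th k z = p * h by rewrite -[z]encK enc_z horner_p_mul.
  apply/eqP; rewrite -subr_eq0; apply/eqP/(ev_eq0 a_inj); last first.
    by rewrite linearB /= -/(enc_code z) E_z subrr.
  apply: leq_trans (size_polyD _ _) _; rewrite size_polyN geq_max.
  by rewrite (leq_trans (size_enc _ _ _)) ?(leq_trans _ le_l_n) ?size_p_mul; lia.
- move=> /sub_RS_codeP[f le_f_l ->]; exists (horner_alg th f).
  rewrite dualmx_QX_code /enc_code -linearB; apply/sub_evmxP.
  have dvd_p := dvdp_sub_enc horner_th_onto horner_th_eq0 size_p f.
  exists ((f - enc th k (horner_alg th f)) %/ p); last by rewrite mulrC divpK.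
  rewrite size_divp // size_p; apply: leq_sub2r.
  apply: leq_trans (size_polyD _ _) _; rewrite size_polyN geq_max le_f_l.
  exact: leq_trans (size_enc _ _ _) le_k_l.
Qed.

Lemma in_Enc_codeP z y : in_Enc QX_code enc_code z y ->
  exists f : {poly F}, [/\ (size f <= l)%N, y = ev a f & horner_alg th f = z].
Proof.
rewrite /in_Enc dualmx_QX_code => /sub_evmxP[t le_t y_t].
exists (enc th k z + p * t); split.
- apply: leq_trans (size_polyD _ _) _; rewrite geq_max size_p_mul // andbT.
  exact: leq_trans (size_enc _ _ _) le_k_l.
- by rewrite linearD /= -y_t /enc_code addrC subrK.
- by rewrite rmorphD /= horner_p_mul addr0 (encK horner_th_onto horner_th_eq0 size_p).
Qed.

Definition dec_code (y : 'rV[F]_n) : L := horner_alg th (interp a y).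

Lemma mult_friendly_code m : (m * l.-1 < n)%N -> mult_friendly QX_code enc_code m.
Proof.
move=> lt_ml_n; exists dec_code; split=> [c u v | z z' z'_enc].
  by rewrite /dec_code !linearP /= mulr_algl.
have [f f_spec] := fin_all_exists (fun h => in_Enc_codeP (z'_enc h)).
have -> : hprod z' = hprod (fun h => ev a (f h)).
  by apply/rowP => i; rewrite !mxE; apply: eq_bigr => h _; case: (f_spec h) => _ ->.
have le_f_l h : (size (f h) <= l)%N by case: (f_spec h).
rewrite hprod_ev /dec_code (ev_interp a_inj); last first.
  by apply: leq_trans (size_prod_leq_const le_f_l) _.
by rewrite rmorph_prod; apply: eq_bigr => h _; case: (f_spec h).
Qed.

End ReedSolomonCSS.

Lemma nonroot_points (F : finFieldType) (p : {poly F}) n :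
  p != 0 -> (n + (size p).-1 <= #|F|)%N ->
  exists a : 'I_n -> F, injective a /\ forall i, p.[a i] != 0.
Proof.
move=> p_neq0 le_n_F; pose R := [set x | root p x].
have card_R : (#|R| < size p)%N.
  rewrite cardE; apply: max_poly_roots p_neq0 _ (enum_uniq _).
  by apply/allP => x; rewrite mem_enum inE.
have le_n_R : (n <= #|~: R|)%N by move: le_n_F; rewrite -(cardsC R); lia.
exists (fun i => enum_val (widen_ord le_n_R i)); split.
  by move=> i j /enum_val_inj/(congr1 val)/= /val_inj.
by move=> i; have := enum_valP (widen_ord le_n_R i); rewrite !inE.
Qed.

Lemma finField_primitive_element (F : finFieldType) (L : fieldExtType F) :
  exists th : L, <<1; th>>%VS = fullv.
Proof.
pose L' := FinSplittingFieldType F L; pose K : {subfield L'} := 1%AS.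
have /and3P[_ sepL _] := finField_galois (sub1v {:L'}%AS).
exists (separable_generator K {:L'}%AS : L).
by rewrite -(eq_adjoin_separable_generator sepL (sub1v _)).
Qed.

Lemma finField_horner_presentation (F : finFieldType) (L : fieldExtType F) :
  exists (th : L) (p : {poly F}),
    [/\ forall v : L, exists g, v = horner_alg th g,
        forall f, (horner_alg th f == 0) = (p %| f) & size p = (\dim {:L}).+1].
Proof.
have [th gen_th] := finField_primitive_element L.
have /polyOver1P[p p_min] := minPolyOver 1 th.
exists th, p; split.
- by move=> v; apply/Fadjoin1_polyP; rewrite gen_th memvf.
- move=> f; rewrite -(dvdp_map (in_alg L)) -p_min.
  apply/eqP/idP => [f_th | /dvdpP[q f_q]].
    by apply: minPoly_dvdp; [exact: alg_polyOver | exact/rootP].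
  by rewrite -[horner_alg th f]/((map_poly (in_alg L) f).[th]) f_q hornerM minPolyxx mulr0.
- rewrite -(size_map_poly (in_alg L)) -p_min size_minPoly adjoin_degreeE gen_th.
  by rewrite dimv1 divn1.
Qed.

Theorem lemmaA1 (F : finFieldType) (L : fieldExtType F) (k r ell m : nat) :
  \dim {: L}%VS = k ->
  (k <= r)%N -> (r <= ell)%N -> (ell.*2 <= #|F|)%N ->
  (m * k.-1 < r)%N -> (m * ell.-1 < #|F| - r)%N ->
  exists (QX QZ : 'M[F]_(#|F| - r)),
    [/\ is_CSS QX QZ, css_dim QX QZ = k, css_dist_ge QX QZ (ell + 1 - r) &
      exists E : L -> 'rV[F]_(#|F| - r), Z_encoding QX QZ E /\ mult_friendly QX E m].
Proof.
move=> dimL le_k_r le_r_l le_2l_q _ lt_ml_n.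
have [th [p [horner_th_onto horner_th_eq0 size_p]]] := finField_horner_presentation L.
rewrite dimL in size_p.
have p_neq0 : p != 0 by rewrite -size_poly_eq0 size_p.
have le_n_F : (#|F| - r + (size p).-1 <= #|F|)%N by rewrite size_p; lia.
have [a [a_inj p_a_neq0]] := nonroot_points p_neq0 le_n_F.
have le_k_l : (k <= ell)%N by lia.
have le_l_n : (ell <= #|F| - r)%N by lia.
exists (QX_code k ell a p), (RS_code ell a); split.
- by apply: is_CSS_code.
- by apply: css_dim_code.
- by apply: css_dist_ge_code => //; lia.
- by exists (enc_code k a th); split; [apply: Z_encoding_code | apply: mult_friendly_code].
Qed.
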